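(* Let $G=(V,E,\omega)\in\mathbb{G}_\pi$. Then for any nonempty $\mathcal{V}\subseteq V$, every sequence of reductions on $G$ with final vertex set $\mathcal{V}$ reduces $G$ to one and the same graph $\mathcal{R}_{\mathcal{V}}[G]=(\mathcal{V},\mathcal{E},\mu)$. Moreover, at least one such sequence of reductions always exists.
   Context: Let $\mathbb{W}$ be the field of rational functions $p(\lambda)/q(\lambda)$ in a complex variable $\lambda$, $p,q\in\mathbb{C}[\lambda]$, $q\neq0$; for $w=p/q$ put $\pi(w)=\deg p-\deg q$ (the zero function counts as $\pi\le0$). A graph $G=(V,E,\omega)$ is a finite directed graph, vertex set $V=\{v_1,\dots,v_n\}$, edges $E$ (loops allowed, at most one edge $e_{ij}$ from $v_i$ to $v_j$), weights $\omega:E\to\mathbb{W}\setminus\{0\}$, $\omega(e_{ij})=0$ if no such edge, $M(G)_{ij}=\omega(e_{ij})$. $\mathbb{G}_\pi$ is the set of graphs with $\pi(M(G)_{ij})\le0$ for all entries. $\bar S=V\setminus S$; $\ell(G)$ is $G$ without loops; $G|_U$ is an induced subgraph. A path is a sequence of distinct vertices $u_1,\dots,u_m$ ($m\ge2$) with edges $u_k\to u_{k+1}$; a cycle is the same with $u_1=u_m$, $u_1,\dots,u_{m-1}$ distinct; $u_2,\dots,u_{m-1}$ are interior. A nonempty $S\subseteq V$ is a structural set ($S\in st(G)$) if $\ell(G)|_{\bar S}$ has no cycles and $\omega(e_{ii})\ne\lambda$ for all $v_i\in\bar S$. For $v_i,v_j\in S$, $\mathcal{B}_{ij}(G;S)$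 is the set of paths or cycles from $v_i$ to $v_j$ with no interior vertex in $S$; $\mathcal{P}_\omega(u_1,\dots,u_m)=\omega(u_1u_2)\prod_{k=2}^{m-1}\frac{\omega(u_ku_{k+1})}{\lambda-\omega(u_ku_k)}$. The reduction $\mathcal{R}_S(G)$ has vertex set $S$, an edge $v_i\to v_j$ iff $\mathcal{B}_{ij}(G;S)\ne\emptyset$, of weight $\sum_{\beta\in\mathcal{B}_{ij}(G;S)}\mathcal{P}_\omega(\beta)$. Sets $S_m\subseteq\dots\subseteq S_1\subseteq V$ induce a sequence of reductions on $G$ with final vertex set $S_m$ if $S_1\in st(G)$ and, with $\mathcal{R}_1(G)=\mathcal{R}_{S_1}(G)$, $S_{i+1}\in st(\mathcal{R}_i(G))$ and $\mathcal{R}_{i+1}(G)=\mathcal{R}_{S_{i+1}}(\mathcal{R}_i(G))$ for $1\le i\le m-1$; the result is $\mathcal{R}_m(G)$. *)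

From HB Require Import structures.
From mathcomp Require Import all_boot all_order all_algebra.
From mathcomp Require Import complex.
From mathcomp Require Import Rstruct.
Set Implicit Arguments. Unset Strict Implicit. Unset Printing Implicit Defensive.
Import Order.TTheory GRing.Theory Num.Theory.
Local Open Scope ring_scope.

Definition Cx := complex Rdefinitions.R.

Definition W := {fraction {poly Cx}}.

Definition lam : W := tofrac 'X.

(* pi(w) <= 0 : w = p/q with deg p - deg q <= 0 (size = deg + 1; the zero
   function is written 0/1, so it satisfies this, as in the paper). Since
   deg p - deg q does not depend on the chosen representation of w != 0,
   this is exactly "pi(w) <= 0". *)
Definition pi_nonpos (w : W) : Prop :=
  exists p q : {poly Cx}, [/\ q != 0, w = tofrac p / tofrac q & (size p <= size q)%N].

(* A weighted directed graph whose vertices are among v_0,...,v_{n-1} ('I_n).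
   gV = vertex set, gE = edge set (ordered pairs, loops allowed, at most one
   edge i -> j), gw = weights, with gw e = 0 when e is not an edge (the matrix
   M(G)). *)
Record graph (n : nat) := Graph {
  gV : {set 'I_n};
  gE : {set 'I_n * 'I_n};
  gw : {ffun 'I_n * 'I_n -> W} }.

Definition wf_graph n (G : graph n) : Prop :=
  [/\ forall e, e \in gE G -> (e.1 \in gV G) && (e.2 \in gV G),
      forall e, e \in gE G -> gw G e != 0
    & forall e, e \notin gE G -> gw G e = 0].

Definition in_Gpi n (G : graph n) : Prop := forall i j, pi_nonpos (gw G (i, j)).

Definition edge n (G : graph n) : rel 'I_n := fun u v => (u, v) \in gE G.

(* l(G)|_T has a cycle: distinct vertices c = u_1..u_k (k >= 1) of T, with
   non-loop edges u_1 -> u_2 -> ... -> u_k -> u_1 (mathcomp's [cycle]). *)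
Definition has_loopless_cycle_in n (G : graph n) (T : {set 'I_n}) : Prop :=
  exists c : seq 'I_n,
    [/\ c != [::], uniq c, all (fun u => u \in T) c
      & cycle (fun u v => (u != v) && edge G u v) c].

Definition structural n (G : graph n) (S : {set 'I_n}) : Prop :=
  [/\ S != set0, S \subset gV G,
      ~ has_loopless_cycle_in G (gV G :\: S)
    & forall i, i \in gV G :\: S -> gw G (i, i) != lam].

Definition is_path n (G : graph n) (s : seq 'I_n) : bool :=
  if s is x :: p then [&& p != [::], uniq s & path (edge G) x p] else false.

Definition is_cycle n (G : graph n) (s : seq 'I_n) : bool :=
  if s is x :: p then
    [&& p != [::], last x p == x, uniq (belast x p) & path (edge G) x p]
  else false.

Definition interior (T : Type) (s : seq T) : seq T :=
  if s is x :: p then behead (belast x p) else [::].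

Definition inB n (G : graph n) (S : {set 'I_n}) (i j : 'I_n) (s : seq 'I_n) : bool :=
  if s is x :: p then
    [&& x == i, last x p == j, is_path G s || is_cycle G s
      & all (fun u => u \notin S) (interior s)]
  else false.

(* P_omega(u_1,...,u_m) = omega(u_1u_2) * prod_{k=2}^{m-1}
   omega(u_k u_{k+1}) / (lambda - omega(u_k u_k)) *)
Fixpoint Pint n (w : 'I_n * 'I_n -> W) (s : seq 'I_n) : W :=
  match s with
  | u :: ((v :: _) as p) => w (u, v) / (lam - w (u, u)) * Pint w p
  | _ => 1
  end.

Definition Pw n (w : 'I_n * 'I_n -> W) (s : seq 'I_n) : W :=
  match s with
  | u :: ((v :: _) as p) => w (u, v) * Pint w p
  | _ => 1
  end.

(* Every element of B_ij(G;S) has at most n+1 vertices, so B_ij(G;S) is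
   exactly the set of sequences t of length k <= n+1 with inB G S i j t. *)
Definition Bnonempty n (G : graph n) (S : {set 'I_n}) (i j : 'I_n) : bool :=
  [exists k : 'I_n.+2, [exists t : k.-tuple 'I_n, inB G S i j t]].

Definition Bsum n (G : graph n) (S : {set 'I_n}) (i j : 'I_n) : W :=
  \sum_(k < n.+2) \sum_(t : k.-tuple 'I_n | inB G S i j t) Pw (gw G) t.

Definition red_edges n (G : graph n) (S : {set 'I_n}) : {set 'I_n * 'I_n} :=
  [set e | [&& e.1 \in S, e.2 \in S & Bnonempty G S e.1 e.2]].

Definition red n (G : graph n) (S : {set 'I_n}) : graph n :=
  Graph S (red_edges G S)
        [ffun e => if e \in red_edges G S then Bsum G S e.1 e.2 else 0].

(* [:: S_1; ...; S_m] induces a sequence of reductions on G: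
   S_1 in st(G), S_{i+1} in st(R_i(G)) (this includes S_{i+1} \subset S_i).
   Its result R_m(G) is foldl red G [:: S_1; ...; S_m]. *)
Fixpoint induces n (G : graph n) (ss : seq {set 'I_n}) : Prop :=
  match ss with
  | [::] => True
  | S1 :: ss1 => structural G S1 /\ induces (red G S1) ss1
  end.

Definition seq_result n (G : graph n) (ss : seq {set 'I_n}) : graph n :=
  foldl (@red n) G ss.

(* Write T = V \ S and M for the weight matrix.  The reduction onto S acts as
   the Schur complement of lam - M: if u solves (lam - M) u = 0 on T, then
   M(G) u and M(R_S(G)) u agree on S, and every vector on S extends to such a
   solution.  The extension is given by the matrix (lam - M_TT)^-1 M_TS,
   which is a finite sum over paths because T carries no cycle and no loop
   of weight lam.  Both properties compose along a sequence of reductions,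
   and applying them to extensions of the indicator vectors of the final
   vertex set recovers every weight of the final graph; its edges are the
   pairs joined by a walk avoiding the final set, so they do not depend on
   the sequence either.  A sequence always exists: delete the other vertices
   one at a time, since pi <= 0 is preserved by reduction and excludes the
   weight lam. *)

From mathcomp Require Import all_boot all_order all_algebra complex Rstruct.
Import GRing.Theory.
Set Implicit Arguments. Unset Strict Implicit. Unset Printing Implicit Defensive.
Local Open Scope ring_scope.
Local Notation "x %:F" := (tofrac x).

Lemma pi_nonpos0 : pi_nonpos 0.
Proof.
exists 0, 1; split; first exact: oner_neq0.
  by rewrite tofrac0 mul0r.
by rewrite size_poly0.
Qed.

Lemma pi_nonpos1 : pi_nonpos 1.
Proof.
exists 1, 1; split; first exact: oner_neq0.
  by rewrite divrr // unitfE tofrac_eq0 oner_neq0.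
by [].
Qed.

Lemma leq_size_mul (p q p' q' : {poly Cx}) : q != 0 -> q' != 0 ->
  leq (size p) (size q) -> leq (size p') (size q') ->
  leq (size (p * p')) (size (q * q')).
Proof.
move=> q0 q'0 le_pq le_pq'; rewrite (size_mul q0 q'0).
apply: leq_trans (size_polyMleq p p') _.
by rewrite -!subn1 leq_sub2r // leq_add.
Qed.

Lemma pi_nonposM w1 w2 : pi_nonpos w1 -> pi_nonpos w2 -> pi_nonpos (w1 * w2).
Proof.
move=> [p1 [q1 [q10 -> s1]]] [p2 [q2 [q20 -> s2]]].
exists (p1 * p2), (q1 * q2); split; first by rewrite mulf_neq0.
  by rewrite mulf_div !tofracM.
exact: leq_size_mul.
Qed.

Lemma pi_nonposD w1 w2 : pi_nonpos w1 -> pi_nonpos w2 -> pi_nonpos (w1 + w2).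
Proof.
move=> [p1 [q1 [q10 -> s1]]] [p2 [q2 [q20 -> s2]]].
exists (p1 * q2 + p2 * q1), (q1 * q2); split; first by rewrite mulf_neq0.
  by rewrite addf_div ?tofrac_eq0 // tofracD !tofracM.
apply: leq_trans (size_polyD _ _) _; rewrite geq_max.
by rewrite leq_size_mul //= mulrC leq_size_mul.
Qed.

Lemma size_mulXB (p q : {poly Cx}) : q != 0 -> (size p <= size q)%N ->
  size (q * 'X - p) = (size q).+1.
Proof. by move=> q0 le_pq; rewrite size_polyDl size_mulX // size_polyN ltnS. Qed.

Lemma lamB_frac (p q : {poly Cx}) : q != 0 -> lam - p%:F / q%:F = (q * 'X - p)%:F / q%:F.
Proof.
by move=> q0; rewrite tofracB mulrBl tofracM [_ * 'X%:F]mulrC mulfK ?tofrac_eq0.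
Qed.

Lemma pi_nonpos_divlamB w1 w2 : pi_nonpos w1 -> pi_nonpos w2 ->
  pi_nonpos (w1 / (lam - w2)).
Proof.
move=> [p1 [q1 [q10 -> s1]]] [p2 [q2 [q20 -> s2]]].
have d0 : q2 * 'X - p2 != 0 by rewrite -size_poly_eq0 size_mulXB.
exists (p1 * q2), (q1 * (q2 * 'X - p2)); split; first by rewrite mulf_neq0.
  by rewrite lamB_frac // invf_div mulf_div !tofracM.
rewrite (size_mul q10 d0) size_mulXB // addnS /=.
apply: leq_trans (size_polyMleq _ _) _.
by apply: leq_trans (leq_pred _) _; rewrite leq_add2r.
Qed.

Lemma pi_nonpos_neq_lam w : pi_nonpos w -> w != lam.
Proof.
move=> [p [q [q0 -> s]]]; apply/eqP => e.
have /eqP : p%:F = ('X * q)%:F by rewrite tofracM -/lam -e divfK ?tofrac_eq0.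
rewrite tofrac_eq => /eqP ep.
by move: s; rewrite ep mulrC size_mulX // ltnn.
Qed.

Section SeqsUpto.
Variable n : nat.
Implicit Types (F : seq 'I_n -> W).

Fixpoint seqs_upto (N : nat) : seq (seq 'I_n) :=
  if N is N'.+1 then [::] :: [seq x :: s | x <- enum 'I_n, s <- seqs_upto N']
  else [:: [::]].

Lemma big_seqs_upto0 F : \sum_(s <- seqs_upto 0) F s = F [::].
Proof. exact: big_seq1. Qed.

Lemma big_seqs_uptoS F N :
  \sum_(s <- seqs_upto N.+1) F s = F [::] + \sum_(x : 'I_n) \sum_(s <- seqs_upto N) F (x :: s).
Proof. by rewrite /= big_cons big_allpairs_dep big_enum. Qed.

Lemma big_seqs_uptoS0 F N : F [::] = 0 ->
  \sum_(s <- seqs_upto N.+1) F s = \sum_(x : 'I_n) \sum_(s <- seqs_upto N) F (x :: s).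
Proof. by move=> F0; rewrite big_seqs_uptoS F0 add0r. Qed.

Lemma big_seqs_upto_widen N M F : (N <= M)%N ->
  (forall s, (N < size s)%N -> F s = 0) ->
  \sum_(s <- seqs_upto N) F s = \sum_(s <- seqs_upto M) F s.
Proof.
elim: N M F => [|N IH] [|M] F // leNM F0.
  rewrite big_seqs_upto0 big_seqs_uptoS big1 ?addr0 // => x _.
  by rewrite big1 // => s _; apply: F0.
rewrite !big_seqs_uptoS; congr (_ + _); apply: eq_bigr => x _.
by apply: IH => // s lt_Ns; exact: F0.
Qed.

Lemma big_seqs_upto_nil N F :
  \sum_(s <- seqs_upto N) (if s == [::] then F s else 0) = F [::].
Proof.
case: N => [|N]; first by rewrite big_seqs_upto0.
by rewrite big_seqs_uptoS /= big1 ?addr0 // => x _; rewrite big1.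
Qed.

Lemma big_tuple0 F : \sum_(t : 0.-tuple 'I_n) F t = F [::].
Proof. by rewrite (big_pred1 [tuple]) // => t; apply/esym/eqP; apply: tuple0. Qed.

Lemma big_tupleS k F :
  \sum_(t : k.+1.-tuple 'I_n) F t = \sum_(x : 'I_n) \sum_(t : k.-tuple 'I_n) F (x :: t).
Proof.
rewrite pair_big (reindex (fun p : 'I_n * k.-tuple 'I_n => [tuple of p.1 :: p.2])) //=.
exists (fun t : k.+1.-tuple 'I_n => (thead t, [tuple of behead t])).
  by move=> [x t] _; congr (_, _); apply: val_inj.
by move=> t _; case/tupleP: t => x t; apply: val_inj.
Qed.

Lemma big_tuples_seqs_upto N F :
  \sum_(k < N.+1) \sum_(t : k.-tuple 'I_n) F t = \sum_(s <- seqs_upto N) F s.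
Proof.
elim: N F => [|N IH] F; first by rewrite big_ord1 big_tuple0 big_seqs_upto0.
rewrite big_ord_recl big_tuple0 big_seqs_uptoS; congr (_ + _).
under eq_bigr do rewrite big_tupleS.
by rewrite exchange_big; apply: eq_bigr => x _; apply: IH.
Qed.

End SeqsUpto.

Lemma size_uniq_ord n (s : seq 'I_n) : uniq s -> (size s <= n)%N.
Proof. by move/card_uniqP <-; rewrite -[X in (_ <= X)%N]card_ord max_card. Qed.

Section Cycles.
Variables (T : eqType) (e : rel T).

Definition simple_cycle_in (A : pred T) :=
  exists c, [/\ c != [::], uniq c, {subset c <= A} & cycle e c].

Lemma simple_cycle_in_sub (A B : pred T) :
  {subset A <= B} -> simple_cycle_in A -> simple_cycle_in B.
Proof. by move=> AB [c [c0 cu cA ce]]; exists c; split=> // x /cA /AB. Qed.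

Lemma path_loop_cycle x q : path e x q -> uniq q -> x \in q ->
  simple_cycle_in (mem (x :: q)).
Proof.
move=> pxq uq xq; case/splitPr: xq pxq uq => p1 p2 pxq uq.
exists (x :: p1); split => //.
- rewrite cat_uniq in uq; case/and3P: uq => u1 /hasPn u2 _ /=.
  rewrite u1 andbT; apply/negP => xp1.
  by move: (u2 x); rewrite mem_head => /(_ isT); rewrite xp1.
- by move=> z; rewrite !inE mem_cat => /orP[->|->]; rewrite ?orbT.
- by move: pxq; rewrite /cycle rcons_path cat_path /= => /and3P[-> -> _].
Qed.

Lemma path_nonuniq_cycle x p : path e x p -> ~~ uniq (x :: p) ->
  simple_cycle_in (mem (x :: p)).
Proof.
elim: p x => [|y p IH] x //= /andP[exy pyp].
rewrite negb_and negbK; case uyp: (uniq (y :: p)); last first.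
  move=> _; apply: simple_cycle_in_sub (IH y pyp (negbT uyp)).
  by move=> z zp; rewrite inE zp orbT.
rewrite -/(uniq (y :: p)) uyp orbF => xyp.
by apply: path_loop_cycle; rewrite //= exy.
Qed.

End Cycles.

(* Pigeonhole on the orbit of a successor function inside [Z]. *)
Lemma successors_cycle (T : finType) (e : rel T) (Z : {set T}) a0 : a0 \in Z ->
  (forall a, a \in Z -> exists2 v, v \in Z & e a v) -> simple_cycle_in e (mem Z).
Proof.
move=> a0Z succ.
pose f a := odflt a [pick v in Z | e a v].
have fZ a : a \in Z -> f a \in Z /\ e a (f a).
  move=> aZ; rewrite /f; case: pickP => [v /andP[]//|none].
  by have [v vZ eav] := succ a aZ; move: (none v); rewrite vZ eav.
have traj k : forall a, a \in Z ->
    path e a (traject f (f a) k) /\ all (mem Z) (traject f (f a) k).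
  elim: k => [|k IHk] a aZ //=.
  by have [faZ eafa] := fZ a aZ; have [-> ->] := IHk _ faZ; rewrite eafa faZ.
have [p_traj Z_traj] := traj #|T| a0 a0Z.
have : ~~ uniq (a0 :: traject f (f a0) #|T|).
  apply/negP => /card_uniqP; rewrite /= size_traject => card_traj.
  by move: (max_card (mem (a0 :: traject f (f a0) #|T|))); rewrite card_traj ltnn.
move/(path_nonuniq_cycle p_traj); apply: simple_cycle_in_sub => x.
by rewrite inE => /predU1P[->|/(allP Z_traj)].
Qed.

Lemma shorten_walk (T : eqType) (e : rel T) x q y : x != y -> path e x (rcons q y) ->
  exists r, [/\ path e x (rcons r y), uniq (x :: rcons r y) & {subset r <= q}].
Proof.
move=> xy pq; have : last x (rcons q y) = y by rewrite last_rcons.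
case/shortenP: pq => p pp up sub_pq.
case/lastP: p pp up sub_pq => [|r z] pr ur sub_rq.
  by move=> /= yx; rewrite yx eqxx in xy.
rewrite last_rcons => zy; subst z; exists r; split => // u ur'.
have : u \in rcons q y by apply: sub_rq; rewrite mem_rcons inE ur' orbT.
rewrite mem_rcons inE => /predU1P[uy|//].
by move: ur; rewrite /= rcons_uniq -uy ur' andbF.
Qed.

Section Walks.
Variable n : nat.
Implicit Types (G : graph n) (X Y S : {set 'I_n}) (i j : 'I_n).

Definition walk_avoiding G X i j :=
  exists q, path (edge G) i (rcons q j) /\ all (fun u => u \notin X) q.

Lemma walk_avoiding_sub G X Y i j :
  X \subset Y -> walk_avoiding G Y i j -> walk_avoiding G X i j.
Proof.
move=> XY [q [pq Yq]]; exists q; split => //; apply/allP => u uq.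
by apply: contra (allP Yq u uq); apply: (subsetP XY).
Qed.

Lemma inB_rcons G X i j r : inB G X i j (i :: rcons r j) =
  (is_path G (i :: rcons r j) || is_cycle G (i :: rcons r j)) && all (fun u => u \notin X) r.
Proof. by rewrite /inB eqxx last_rcons eqxx /interior belast_rcons. Qed.

Lemma inB_walk G X i j s : inB G X i j s -> walk_avoiding G X i j.
Proof.
case: s => [|x p] //= /and4P[/eqP-> /eqP last_p pc Xint].
have [p0 pp] : p != [::] /\ path (edge G) i p.
  by move: pc; rewrite /is_path /is_cycle => /orP[/and3P[]|/and4P[]].
clear pc; case/lastP: p p0 last_p pp Xint => [|r y] // _; rewrite last_rcons => ->.
by rewrite /interior belast_rcons; exists r.
Qed.

Lemma Bnonempty_walk G X i j : Bnonempty G X i j -> walk_avoiding G X i j.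
Proof. by case/existsP => k /existsP[t /inB_walk]. Qed.

Lemma inB_size G X i j s : inB G X i j s -> (size s <= n.+1)%N.
Proof.
case: s => [|x p] //= /and4P[_ _ /orP[/and3P[_ u _]|/and4P[_ _ u _]] _].
  exact: leqW (size_uniq_ord (s := x :: p) u).
by rewrite ltnS -(size_belast x p); apply: size_uniq_ord.
Qed.

Lemma inB_Bnonempty G X i j s : inB G X i j s -> Bnonempty G X i j.
Proof.
move=> Bs; apply/existsP; exists (Ordinal (inB_size Bs : size s < n.+2)%N).
by apply/existsP; exists (@Tuple _ _ s (eqxx (size s))).
Qed.

Lemma walk_Bnonempty_neq G X i j : i != j -> walk_avoiding G X i j -> Bnonempty G X i j.
Proof.
move=> ij [q [pq Xq]]; have [r [pr ur sub_rq]] := shorten_walk ij pq.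
apply: (@inB_Bnonempty _ _ _ _ (i :: rcons r j)); rewrite inB_rcons.
rewrite /is_path -size_eq0 size_rcons ur pr /=.
by apply/allP => u /sub_rq /(allP Xq).
Qed.

Lemma walk_Bnonempty_loop G X i : i \in X -> walk_avoiding G X i i -> Bnonempty G X i i.
Proof.
move=> iX [[|y q] [pq Xq]].
  apply: (@inB_Bnonempty _ _ _ _ (i :: rcons [::] i)).
  by rewrite inB_rcons /is_cycle /= eqxx; move: pq => /= ->; rewrite orbT.
move: pq Xq => /= /andP[eiy pyq] /andP[yX Xq].
have yi : y != i by apply: contraNneq yX => ->.
have [r [pr ur sub_rq]] := shorten_walk yi pyq.
have ir : i \notin r by move: ur; rewrite /= rcons_uniq => /and3P[].
apply: (@inB_Bnonempty _ _ _ _ (i :: rcons (y :: r) i)); rewrite inB_rcons.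
apply/andP; split; last by rewrite /= yX; apply/allP => u /sub_rq /(allP Xq).
apply/orP; right; rewrite /is_cycle last_rcons belast_rcons eqxx /= eiy pr !andbT.
rewrite inE negb_or eq_sym yi ir.
by move: ur; rewrite /= rcons_uniq mem_rcons inE negb_or => /and3P[/andP[_ ->] _ ->].
Qed.

Lemma walk_Bnonempty G X i j : i \in X -> j \in X ->
  walk_avoiding G X i j -> Bnonempty G X i j.
Proof.
move=> iX jX; case: (eqVneq i j) => [<-|]; first exact: walk_Bnonempty_loop.
exact: walk_Bnonempty_neq.
Qed.

Lemma edge_red G S a b : edge (red G S) a b = [&& a \in S, b \in S & Bnonempty G S a b].
Proof. by rewrite /edge inE. Qed.

Lemma walk_red_walk G S X i j : X \subset S ->
  walk_avoiding (red G S) X i j -> walk_avoiding G X i j.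
Proof.
move=> XS [q [pq Xq]]; elim: q i pq Xq => [|y q IH] i /= pq Xq.
  move: pq; rewrite andbT edge_red => /and3P[_ _ /Bnonempty_walk].
  exact: walk_avoiding_sub.
case/andP: pq => eiy pyq; case/andP: Xq => yX Xq.
have [q1 [p1 X1]] : walk_avoiding G X i y.
  by move: eiy; rewrite edge_red => /and3P[_ _ /Bnonempty_walk]; apply: walk_avoiding_sub.
have [q2 [p2 X2]] := IH y pyq Xq.
exists (q1 ++ y :: q2); split; last by rewrite all_cat /= yX X1 X2.
by rewrite rcons_cat /= -cat_rcons cat_path p1 last_rcons p2.
Qed.

(* Induction on the part of the walk still to be cut at its visits to [S]:
   [r] is the segment since the last visit [a]. *)
Lemma walk_walk_red G S X i j : X \subset S -> i \in S -> j \in S ->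
  walk_avoiding G X i j -> walk_avoiding (red G S) X i j.
Proof.
move=> XS iS jS [q [pq Xq]].
suff cut_at_S : forall q a r, a \in S -> all (fun u => u \notin S) r ->
    all (fun u => u \notin X) q -> path (edge G) a (r ++ rcons q j) ->
    walk_avoiding (red G S) X a j.
  exact: (cut_at_S q i [::]).
move=> {pq Xq} {}q; elim: q => [|b q IH] a r aS Sr Xq pq.
  exists [::]; split => //=; rewrite andbT edge_red aS jS /=.
  by apply: walk_Bnonempty => //; exists r; rewrite cats1 in pq.
case/andP: Xq => bX Xq; case: (boolP (b \in S)) => bS; last first.
  by apply: (IH a (rcons r b)); rewrite ?all_rcons ?bS ?cat_rcons.
move: pq; rewrite -cat_rcons cat_path last_rcons => /andP[p1 p2].
have [q2 [pq2 Xq2]] := IH b [::] bS isT Xq p2.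
exists (b :: q2); split; last by rewrite /= bX Xq2.
rewrite /= pq2 andbT edge_red aS bS /=.
by apply: walk_Bnonempty => //; exists r.
Qed.

Lemma Bnonempty_red G S X i j : X \subset S -> i \in X -> j \in X ->
  Bnonempty (red G S) X i j = Bnonempty G X i j.
Proof.
move=> XS iX jX; have iS := subsetP XS i iX; have jS := subsetP XS j jX.
apply/idP/idP => /Bnonempty_walk walk_ij; apply: walk_Bnonempty => //.
  exact: walk_red_walk walk_ij.
exact: walk_walk_red.
Qed.

End Walks.

Definition supported n (G : graph n) :=
  (forall e, e \in gE G -> (e.1 \in gV G) && (e.2 \in gV G)) /\
  (forall e, e \notin gE G -> gw G e = 0).

Definition act n (H : graph n) (u : 'I_n -> W) t := \sum_v gw H (t, v) * u v.

Lemma act_split n (H : graph n) (S : {set 'I_n}) u t : act H u t =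
  \sum_(v in S) gw H (t, v) * u v + \sum_(v | v \notin S) gw H (t, v) * u v.
Proof. exact: bigID. Qed.

Definition harmonic_on n (H : graph n) (T : {set 'I_n}) (u : 'I_n -> W) :=
  forall t, t \in T -> lam * u t = act H u t.

Definition act_compatible n (H H' : graph n) := forall u,
  harmonic_on H (gV H :\: gV H') u -> {in gV H', forall s, act H u s = act H' u s}.

Definition harmonic_extendable n (H H' : graph n) := forall u : 'I_n -> W,
  exists2 u', {in gV H', forall s, u' s = u s} & harmonic_on H (gV H :\: gV H') u'.

Lemma sum_neq0_exists (V : nmodType) (I : finType) (P : pred I) (F : I -> V) :
  \sum_(i | P i) F i != 0 -> exists i, P i && (F i != 0).
Proof.
move=> sum0; case: (pickP (fun i => P i && (F i != 0))) => [i Fi|none]; first by exists i.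
move: sum0; rewrite big1 ?eqxx // => i Pi.
by move: (none i); rewrite Pi => /negbFE/eqP.
Qed.

Section Reduction.
Variables (n : nat) (G : graph n) (S : {set 'I_n}).
Hypothesis G_supp : supported G.
Local Notation w := (gw G).

Lemma weight_nonedge u v : ~~ edge G u v -> w (u, v) = 0.
Proof. exact: G_supp.2. Qed.

Lemma edge_vertices u v : edge G u v -> (u \in gV G) && (v \in gV G).
Proof. exact: G_supp.1 (u, v). Qed.

Definition escape_path a r j :=
  [&& r != [::], last a r == j, uniq (a :: r), path (edge G) a r
    & all (fun u => u \notin S) (belast a r)].

(* Once [V \ S] carries no cycle, [escape_sum a j] is the entry [(a, j)] of
   [(lam - M_TT)^-1 M_TS], [T = V \ S], expanded along the paths. *)
Definition escape_sum a j :=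
  \sum_(r <- seqs_upto n n) (if escape_path a r j then Pint w (a :: r) else 0).

Lemma escape_path_size a r j : escape_path a r j -> (size r < n)%N.
Proof. by case/and5P => _ _ /size_uniq_ord. Qed.

Lemma escape_path_cons a y r j : r != [::] ->
  escape_path a (y :: r) j = [&& edge G a y, a \notin y :: r, a \notin S & escape_path y r j].
Proof.
move=> r0; rewrite /escape_path r0 /=.
by case: (last y r == j); case: (a \in y :: r); case: (y \in r); case: (uniq r);
  case: (edge G a y); case: (path _ _ _); case: (a \in S); case: (all _ _).
Qed.

Lemma escape_sum_S y j : y \in S -> escape_sum y j = 0.
Proof.
move=> yS; rewrite /escape_sum big1 // => r _; case: ifP => // /and5P[r0 _ _ _].
by case: r r0 => [|z r] //= _ /andP[]; rewrite yS.
Qed.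

Lemma inB_pair i j y : inB G S i j [:: i; y] = (y == j) && edge G i y.
Proof.
rewrite /inB /= eqxx /= /is_path /is_cycle /= !andbT inE.
by case: (eqVneq i y) => [->|] /=; rewrite ?eqxx ?andbF //= orbF.
Qed.

Lemma inB_escape i j y r : i \in S -> j \in S -> r != [::] ->
  inB G S i j [:: i, y & r] = edge G i y && escape_path y r j.
Proof.
move=> iS jS; case/lastP: r => [|r z] // _.
rewrite /inB /escape_path eqxx /= -!rcons_cons !last_rcons -size_eq0 size_rcons /=.
case: (eqVneq z j) => [->|zj]; last by rewrite !andbF.
rewrite belast_rcons; case Sr: (all _ (y :: r)); last by rewrite !andbF.
have [iy ir jy jr] : [/\ i != y, i \notin r, j != y & j \notin r].
  move: Sr => /= /andP[yS /allP Sr]; split.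
  - by apply: contraNneq yS => <-.
  - by apply/negP => /Sr; rewrite iS.
  - by apply: contraNneq yS => <-.
  - by apply/negP => /Sr; rewrite jS.
have -> : (i \notin y :: rcons r j) = (i != j).
  by rewrite in_cons mem_rcons in_cons (negbTE iy) (negbTE ir) orbF.
have -> : (y \notin rcons r j) = (y \notin r).
  by rewrite mem_rcons in_cons negb_or eq_sym jy.
have -> : uniq (rcons r j) = uniq r by rewrite rcons_uniq jr.
have -> : (i \notin y :: r) by rewrite in_cons negb_or iy ir.
rewrite !andbT -/(uniq (y :: r)).
case: (eqVneq i j) => [->|ij] /=; rewrite ?eqxx ?andbF ?orbF //=;
  by case: (edge G _ y); rewrite ?andbF.
Qed.

Lemma weight_inB_cons i j y r : i \in S -> j \in S ->
  (if inB G S i j [:: i, y & r] then Pw w [:: i, y & r] else 0) =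
  (if r == [::] then (if y == j then (if edge G i y then w (i, y) else 0) else 0) else 0)
  + w (i, y) * (if escape_path y r j then Pint w (y :: r) else 0).
Proof.
move=> iS jS; case: (eqVneq r [::]) => [->|r0].
  rewrite inB_pair /escape_path /= mulr0 addr0 mulr1.
  by case: (y == j); case: (edge G i y).
rewrite inB_escape // add0r; case eiy: (edge G i y) => /=.
  by case: (escape_path y r j); rewrite ?mulr0.
by rewrite weight_nonedge ?eiy // mul0r.
Qed.

Lemma Bsum_escape i j : i \in S -> j \in S ->
  Bsum G S i j = w (i, j) + \sum_y w (i, y) * escape_sum y j.
Proof.
move=> iS jS; rewrite /Bsum; under eq_bigr do rewrite big_mkcond /=.
rewrite (big_tuples_seqs_upto n.+1 (fun s => if inB G S i j s then Pw w s else 0)).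
rewrite (@big_seqs_upto_widen _ n.+1 n.+2) //; last first.
  by move=> s lt_s; case: ifP => // /inB_size; rewrite leqNgt lt_s.
rewrite big_seqs_uptoS0 // (big_only1 i) //; last first.
  by move=> x xi _; rewrite big1 // => s _; rewrite /inB (negbTE xi).
rewrite big_seqs_uptoS0; last by rewrite /inB /is_path /is_cycle /= !andbF.
under eq_bigr do under eq_bigr do rewrite weight_inB_cons //.
under eq_bigr do rewrite big_split /= big_seqs_upto_nil.
rewrite big_split /=; congr (_ + _).
  rewrite -big_mkcond big_pred1_eq.
  by case eij: (edge G i j) => //; rewrite weight_nonedge ?eij.
by apply: eq_bigr => y _; rewrite /escape_sum mulr_sumr.
Qed.

Lemma path_vertices a r : path (edge G) a r -> all (fun u => u \in gV G) r.
Proof.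
elim: r a => [|b r IH] a //= /andP[eab pbr].
by rewrite (IH b pbr) andbT; case/andP: (edge_vertices eab).
Qed.

Lemma path_loopless (e : rel 'I_n) a r : path e a r -> uniq (a :: r) ->
  path (fun u v => (u != v) && e u v) a r.
Proof.
elim: r a => [|b r IH] a //= /andP[eab pbr] /andP[].
by rewrite in_cons negb_or => /andP[-> ar] ubr; rewrite eab IH.
Qed.

Hypothesis S_acyclic : ~ has_loopless_cycle_in G (gV G :\: S).

Lemma escape_path_notin a y r j : a \notin S -> edge G a y -> a != y ->
  escape_path y r j -> a \notin r.
Proof.
move=> aS eay ay /and5P[r0 last_r ur pr Sr].
apply/negP => ar; apply: S_acyclic.
case/splitPr: ar last_r ur pr Sr r0 => r1 r2 _ ur pr Sr _.
exists [:: a, y & r1]; split => //.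
- move: ur; rewrite -cat_cons cat_uniq => /and3P[u1 /hasPn u2 _].
  by rewrite cons_uniq u1 andbT; apply: u2 a (mem_head a r2).
- have /andP[Va Vy] := edge_vertices eay.
  have Vr := path_vertices pr.
  have Syr1 : all (fun u => u \notin S) (y :: r1).
    move: Sr; rewrite belast_cat all_cat => /andP[S1 /= /andP[S3 _]].
    by change (all (fun u => u \notin S) (y :: r1)); rewrite lastI all_rcons S3 S1.
  rewrite /= !inE aS Va /=; apply/andP; split; first by case/andP: Syr1 => ->.
  apply/allP => u ur1; rewrite inE (allP Syr1 u) ?inE ?ur1 ?orbT //=.
  by apply: (allP Vr); rewrite mem_cat ur1.
- rewrite /cycle /= ay eay /=.
  by move: (path_loopless pr ur); rewrite cat_path rcons_path /= => /and3P[-> ->].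
Qed.

Definition lam_ratio a y := w (a, y) / (lam - w (a, a)).

Lemma escape_weight_cons a y r j : j \in S -> a \notin S ->
  (if escape_path a (y :: r) j then Pint w [:: a, y & r] else 0) =
  (if r == [::] then (if y == j then lam_ratio a y else 0) else 0)
  + (if y != a then lam_ratio a y * (if escape_path y r j then Pint w (y :: r) else 0)
     else 0).
Proof.
move=> jS aS; case: (eqVneq r [::]) => [->|r0].
  rewrite (_ : escape_path y [::] j = false) // mulr0 if_same addr0.
  rewrite /escape_path /= !andbT aS andbT; case: (eqVneq y j) => [->|//].
  have aj : a != j by apply: contraNneq aS => ->.
  rewrite mulr1 in_cons negb_or aj /=.
  by case eaj: (edge G a j) => //; rewrite /lam_ratio weight_nonedge ?eaj // mul0r.
rewrite add0r escape_path_cons // aS.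
have -> : Pint w [:: a, y & r] = lam_ratio a y * Pint w (y :: r) by [].
case: (eqVneq y a) => [->|ya]; first by rewrite in_cons eqxx /= andbF.
case ep: (escape_path y r j); last by rewrite !andbF mulr0.
case eay: (edge G a y); last by rewrite /lam_ratio weight_nonedge ?eay // !mul0r.
by rewrite in_cons negb_or eq_sym ya (escape_path_notin aS eay _ ep) // eq_sym.
Qed.

Lemma escape_sum_rec a j : j \in S -> a \notin S ->
  escape_sum a j = lam_ratio a j + \sum_(y | y != a) lam_ratio a y * escape_sum y j.
Proof.
move=> jS aS; rewrite /escape_sum (@big_seqs_upto_widen _ n n.+1) //; last first.
  by move=> s lt_s; case: ifP => // /escape_path_size; rewrite ltnNge ltnW.
rewrite big_seqs_uptoS0; last by rewrite /escape_path eqxx.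
under eq_bigr => x _ do under eq_bigr => s _ do rewrite escape_weight_cons //.
under eq_bigr do rewrite big_split /= big_seqs_upto_nil.
rewrite big_split /= -big_mkcond big_pred1_eq; congr (_ + _).
rewrite [RHS]big_mkcond; apply: eq_bigr => y _.
by case: (y != a); [rewrite mulr_sumr | rewrite big1].
Qed.

Hypothesis S_nolam : forall i, i \in gV G :\: S -> w (i, i) != lam.

Lemma lamB_loop_neq0 t : t \in gV G :\: S -> lam - w (t, t) != 0.
Proof. by move=> /S_nolam; rewrite subr_eq0 eq_sym. Qed.

Lemma escape_sum_harmonic t j : t \in gV G :\: S -> j \in S ->
  lam * escape_sum t j = w (t, j) + \sum_y w (t, y) * escape_sum y j.
Proof.
move=> tT jS; have tS : t \notin S by move: tT; rewrite inE => /andP[].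
have lamB_eq : (lam - w (t, t)) * escape_sum t j =
    w (t, j) + \sum_(y | y != t) w (t, y) * escape_sum y j.
  rewrite escape_sum_rec // mulrDr mulr_sumr; congr (_ + _).
    by rewrite /lam_ratio mulrC divfK ?lamB_loop_neq0.
  apply: eq_bigr => y _.
  by rewrite /lam_ratio mulrA [(_ - _) * _]mulrC divfK ?lamB_loop_neq0.
by rewrite (bigD1 t) //= addrCA -lamB_eq mulrBl addrC subrK.
Qed.

Lemma Bsum_eq0 i j : ~~ Bnonempty G S i j -> Bsum G S i j = 0.
Proof.
move=> B0; rewrite /Bsum big1 // => k _; rewrite big1 // => t Bt.
by move: B0; apply: contraNeq => _; apply/existsP; exists k; apply/existsP; exists t.
Qed.

Lemma act_red u s : s \in S -> act (red G S) u s = \sum_(v in S) Bsum G S s v * u v.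
Proof.
move=> sS; rewrite /act [RHS]big_mkcond; apply: eq_bigr => v _.
rewrite ffunE /red_edges inE /= sS; case: (boolP (v \in S)) => vS /=; last by rewrite mul0r.
by case: ifP => // /negbT/Bsum_eq0 ->.
Qed.

Lemma act_escape t (x : 'I_n -> W) :
  \sum_(j in S) (w (t, j) + \sum_y w (t, y) * escape_sum y j) * x j =
  \sum_(v in S) w (t, v) * x v
  + \sum_(v | v \notin S) w (t, v) * \sum_(j in S) escape_sum v j * x j.
Proof.
under eq_bigr do rewrite mulrDl.
rewrite big_split /=; congr (_ + _).
under eq_bigr do rewrite mulr_suml.
rewrite exchange_big /= [LHS](bigID (fun v => v \in S)) /= big1 ?add0r.
  by apply: eq_bigr => v _; rewrite mulr_sumr; apply: eq_bigr => j _; rewrite mulrA.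
by move=> v vS; rewrite big1 // => j _; rewrite escape_sum_S // mulr0 mul0r.
Qed.

Lemma red_harmonic_extendable : harmonic_extendable G (red G S).
Proof.
move=> u; exists (fun a => if a \in S then u a else \sum_(j in S) escape_sum a j * u j).
  by move=> s /= ->.
move=> t /= tT; have /negbTE tS : t \notin S by move: tT; rewrite inE => /andP[].
rewrite tS mulr_sumr.
under eq_bigr => j jS do rewrite mulrA (escape_sum_harmonic tT jS).
rewrite act_escape (act_split _ S); congr (_ + _).
  by apply: eq_bigr => v ->.
by apply: eq_bigr => v /negbTE ->.
Qed.

(* On the support of a nonzero solution every vertex has a successor in the
   support, which would close a cycle in [V \ S]. *)
Lemma harmonic_acyclic_eq0 (D : 'I_n -> W) :
  (forall t, t \in gV G :\: S -> lam * D t = \sum_(v | v \notin S) w (t, v) * D v) ->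
  {in gV G :\: S, forall t, D t = 0}.
Proof.
move=> harmD t tT; apply/eqP/negPn/negP => Dt; apply: S_acyclic.
pose Z := [set t | (t \in gV G :\: S) && (D t != 0)].
have succ a : a \in Z -> exists2 v, v \in Z & (a != v) && edge G a v.
  rewrite inE => /andP[aT Da].
  have aS : a \notin S by move: aT; rewrite inE => /andP[].
  have : \sum_(v | (v \notin S) && (v != a)) w (a, v) * D v != 0.
    rewrite (_ : \sum_(v | _) _ = (lam - w (a, a)) * D a).
      by rewrite mulf_neq0 ?lamB_loop_neq0.
    by rewrite mulrBl harmD // [in RHS](bigD1 a) //= addrAC subrr add0r.
  case/sum_neq0_exists => v /andP[/andP[vS va]]; rewrite mulf_eq0 negb_or.
  case/andP => wav Dv; have eav : edge G a v by apply: contraNT wav => /weight_nonedge ->.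
  exists v; last by rewrite eq_sym va.
  by rewrite !inE Dv vS andbT; case/andP: (edge_vertices eav).
have tZ : t \in Z by rewrite inE tT Dt.
have [c [c0 uc Zc cc]] := successors_cycle tZ succ.
by exists c; split => //; apply/allP => x /Zc; rewrite inE => /andP[].
Qed.

Lemma red_act_compatible : act_compatible G (red G S).
Proof.
move=> u harm_u s sS; rewrite /= in harm_u sS.
(* [D] compares [u] with the extension of its restriction to [S]. *)
pose D t := u t - \sum_(j in S) escape_sum t j * u j.
have D0 : {in gV G :\: S, forall t, D t = 0}.
  apply: harmonic_acyclic_eq0 => t tT.
  rewrite /D mulrBr harm_u // mulr_sumr.
  under eq_bigr => j jS do rewrite mulrA (escape_sum_harmonic tT jS).
  rewrite act_escape (act_split _ S) opprD addrACA subrr add0r -sumrB.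
  by apply: eq_bigr => v _; rewrite mulrBr.
rewrite act_red //; under eq_bigr => v vS do rewrite (Bsum_escape sS vS).
rewrite act_escape (act_split _ S); congr (_ + _).
apply: eq_bigr => v vS; case: (boolP (v \in gV G)) => vV.
  have /eqP : D v = 0 by apply: D0; rewrite inE vS vV.
  by rewrite subr_eq0 => /eqP ->.
have nev : ~~ edge G s v by apply: contraNN vV => /edge_vertices /andP[].
by rewrite weight_nonedge // !mul0r.
Qed.

End Reduction.

Section Sequences.
Variable n : nat.
Implicit Types (G H : graph n) (S X : {set 'I_n}).

Lemma supported_red G S : supported (red G S).
Proof.
split => [[a b]|e]; first by rewrite inE /= => /and3P[-> -> _].
by rewrite ffunE => /negbTE ->.
Qed.

Lemma act_compatible_refl H : act_compatible H H.
Proof. by []. Qed.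

Lemma harmonic_extendable_refl H : harmonic_extendable H H.
Proof. by move=> u; exists u => // t; rewrite setDv inE. Qed.

Lemma act_compatible_trans H1 H2 H3 : gV H3 \subset gV H2 -> gV H2 \subset gV H1 ->
  act_compatible H1 H2 -> act_compatible H2 H3 -> act_compatible H1 H3.
Proof.
move=> s32 s21 c12 c23 u harm_u s sV3.
have harm12 : harmonic_on H1 (gV H1 :\: gV H2) u.
  move=> t; rewrite !inE => /andP[t2 t1]; apply: harm_u; rewrite !inE t1 andbT.
  by apply: contra t2; apply: (subsetP s32).
rewrite (c12 u harm12 s (subsetP s32 s sV3)); apply: c23 => // t.
rewrite !inE => /andP[t3 t2]; rewrite -(c12 u harm12 t t2).
by apply: harm_u; rewrite !inE t3 (subsetP s21).
Qed.

Lemma harmonic_extendable_trans H1 H2 H3 : gV H3 \subset gV H2 -> supported H2 ->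
  act_compatible H1 H2 -> harmonic_extendable H1 H2 -> harmonic_extendable H2 H3 ->
  harmonic_extendable H1 H3.
Proof.
move=> s32 H2_supp c12 e12 e23 u.
have [u2 u2u harm2] := e23 u; have [u1 u1u2 harm1] := e12 u2.
exists u1 => [s sV3|t]; first by rewrite u1u2 ?u2u //; apply: (subsetP s32).
rewrite !inE => /andP[t3 t1]; case: (boolP (t \in gV H2)) => t2.
  rewrite u1u2 // harm2 ?inE ?t3 // (c12 u1 harm1 t t2); apply: eq_bigr => v _.
  case: (boolP (v \in gV H2)) => vV; first by rewrite u1u2.
  suff -> : gw H2 (t, v) = 0 by rewrite !mul0r.
  by apply: H2_supp.2; apply: contra vV => /H2_supp.1 /andP[].
by apply: harm1; rewrite inE t2.
Qed.

Lemma seq_result_props G ss : supported G -> induces G ss ->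
  [/\ act_compatible G (seq_result G ss), harmonic_extendable G (seq_result G ss),
      gV (seq_result G ss) \subset gV G & supported (seq_result G ss)].
Proof.
elim: ss G => [|S ss IH] G G_supp /=.
  by split; [apply: act_compatible_refl | apply: harmonic_extendable_refl | |].
move=> [[_ SV S_acyclic S_nolam] ind].
have [c1 e1 s1 supp1] := IH (red G S) (supported_red G S) ind.
have c0 := red_act_compatible G_supp S_acyclic S_nolam.
have e0 := red_harmonic_extendable G_supp S_acyclic S_nolam.
split => //; last exact: subset_trans s1 SV.
- exact: act_compatible_trans c0 c1.
- by apply: harmonic_extendable_trans e0 e1 => //; apply: supported_red.
Qed.

Lemma Bnonempty_seq_result G ss : supported G -> induces G ss -> forall X i j,
  X \subset gV (seq_result G ss) -> i \in X -> j \in X ->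
  Bnonempty (seq_result G ss) X i j = Bnonempty G X i j.
Proof.
elim: ss G => [|S ss IH] G G_supp //= [_ ind] X i j XV iX jX.
have [_ _ s1 _] := seq_result_props (supported_red G S) ind.
rewrite (IH (red G S) (supported_red G S) ind X i j XV iX jX).
by apply: Bnonempty_red => //; apply: subset_trans XV s1.
Qed.

Lemma induces_rcons G ss S : induces G (rcons ss S) ->
  induces G ss /\ structural (seq_result G ss) S.
Proof.
elim: ss G => [|T ss IH] G /=; first by case.
by case=> ST /IH[ind str].
Qed.

Lemma seq_result_rcons G ss S : seq_result G (rcons ss S) = red (seq_result G ss) S.
Proof. exact: foldl_rcons. Qed.

Definition is_reduction G Vf H :=
  [/\ gV H = Vf, gE H = red_edges G Vf, forall e, e \notin gE H -> gw H e = 0,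
      act_compatible G H & harmonic_extendable G H].

Lemma is_reduction_supported G Vf H : is_reduction G Vf H -> supported H.
Proof. by case=> HV EH wH _ _; split => // e; rewrite EH HV inE => /and3P[-> -> _]. Qed.

Lemma seq_result_is_reduction G ss Vf : supported G -> ss != [::] -> induces G ss ->
  last set0 ss = Vf -> is_reduction G Vf (seq_result G ss).
Proof.
move=> G_supp; case/lastP: ss => [|ss S] // _ ind; rewrite last_rcons => <-.
have [c e _ _] := seq_result_props G_supp ind.
have [ind' [_ SV _ _]] := induces_rcons ind.
have [_ _ s1 _] := seq_result_props G_supp ind'.
move: c e; rewrite seq_result_rcons => c e.
split => //; last exact: (supported_red _ S).2.
apply/setP => -[a b]; rewrite !inE /=.
by case aS: (a \in S); case bS: (b \in S); rewrite //= Bnonempty_seq_result.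
Qed.

Lemma act_indicator H Vf (u : 'I_n -> W) s v :
  gV H = Vf -> supported H -> s \in Vf -> v \in Vf ->
  {in Vf, forall x, u x = (x == v)%:R} -> act H u s = gw H (s, v).
Proof.
move=> HV H_supp sV vV uV; rewrite /act (bigD1 v) //= uV // eqxx mulr1 big1 ?addr0 //.
move=> x xv; case: (boolP (x \in Vf)) => xV; first by rewrite uV // (negbTE xv) mulr0.
suff -> : gw H (s, x) = 0 by rewrite mul0r.
by apply: H_supp.2; apply: contra xV => /H_supp.1 /andP[_]; rewrite HV.
Qed.

(* Testing [act_compatible] on harmonic extensions of the indicators of the
   vertices of [Vf] recovers every weight of the reduced graph. *)
Lemma is_reduction_unique G Vf H1 H2 :
  is_reduction G Vf H1 -> is_reduction G Vf H2 -> H1 = H2.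
Proof.
move=> red1 red2; have supp1 := is_reduction_supported red1.
have supp2 := is_reduction_supported red2.
case: red1 red2 => [V1 E1 w1 c1 e1] [V2 E2 w2 c2 _].
have eq_w : gw H1 = gw H2.
  apply/ffunP => -[s v].
  case: (boolP ((s \in Vf) && (v \in Vf))) => [/andP[sV vV]|sv]; last first.
    have sv_E : (s, v) \notin red_edges G Vf.
      by rewrite inE; apply: contra sv => /and3P[-> ->].
    by rewrite w1 ?w2 ?E1 ?E2.
  have [u uv harm_u] := e1 (fun x => (x == v)%:R).
  have uV : {in Vf, forall x, u x = (x == v)%:R} by rewrite -V1.
  rewrite -(act_indicator V1 supp1 sV vV uV) -(act_indicator V2 supp2 sV vV uV).
  have harm2 : harmonic_on G (gV G :\: gV H2) u by rewrite V2 -V1.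
  by rewrite -(c1 u harm_u s) ?V1 // -(c2 u harm2 s) ?V2.
case: H1 H2 V1 V2 E1 E2 eq_w {w1 w2 c1 c2 e1 supp1 supp2} => ? ? ? [? ? ?] /=.
by move=> -> -> -> -> ->.
Qed.

End Sequences.

Section Existence.
Variable n : nat.
Implicit Types (G H : graph n) (S : {set 'I_n}).

Lemma pi_nonpos_Pint (w : 'I_n * 'I_n -> W) : (forall e, pi_nonpos (w e)) ->
  forall s, pi_nonpos (Pint w s).
Proof.
move=> w_pi; elim => [|u [|v s] IH]; try exact: pi_nonpos1.
by apply: pi_nonposM => //; apply: pi_nonpos_divlamB.
Qed.

Lemma pi_nonpos_Pw (w : 'I_n * 'I_n -> W) : (forall e, pi_nonpos (w e)) ->
  forall s, pi_nonpos (Pw w s).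
Proof.
move=> w_pi [|u [|v s]]; try exact: pi_nonpos1.
by apply: pi_nonposM => //; apply: pi_nonpos_Pint.
Qed.

Lemma in_Gpi_red G S : in_Gpi G -> in_Gpi (red G S).
Proof.
move=> G_pi i j; rewrite ffunE; case: ifP => _; last exact: pi_nonpos0.
have w_pi e : pi_nonpos (gw G e) by case: e.
apply: (big_ind pi_nonpos pi_nonpos0 pi_nonposD) => k _.
by apply: (big_ind pi_nonpos pi_nonpos0 pi_nonposD) => t _; apply: pi_nonpos_Pw.
Qed.

Lemma no_loopless_cycle_subsingleton H (T : {set 'I_n}) :
  {in T &, forall x y, x = y} -> ~ has_loopless_cycle_in H T.
Proof.
move=> T1 [[|x [|y c]] [] //= _]; first by rewrite /cycle /= eqxx.
rewrite in_cons negb_or => /andP[/andP[xy _] _] /and3P[xT yT _].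
by rewrite (T1 x y xT yT) eqxx in xy.
Qed.

(* Vertices are removed one at a time: the removed part is then a single
   vertex, which carries no loopless cycle, and loop weights with pi <= 0
   differ from lam. *)
Lemma exists_reduction_seq Vf : Vf != set0 -> forall (l : seq 'I_n) H,
  in_Gpi H -> gV H = Vf :|: [set x in l] ->
  exists ss, [/\ ss != [::], induces H ss & last set0 ss = Vf].
Proof.
move=> Vf0; elim => [|t l IH] H H_pi HV.
  have {}HV : gV H = Vf by rewrite HV; apply/setP => x; rewrite !inE orbF.
  exists [:: Vf]; split => //=; split => //; split => //; rewrite HV ?setDv //.
    by apply: no_loopless_cycle_subsingleton => x y; rewrite inE.
  by move=> i; rewrite inE.
set S := Vf :|: [set x in l].
have S_str : structural H S.
  split.
  - by apply: contraNneq Vf0 => S0; rewrite -subset0 -S0 subsetUl.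
  - by rewrite HV; apply/subsetP => x; rewrite !inE; case: (x \in Vf) => //= ->; rewrite orbT.
  - apply: no_loopless_cycle_subsingleton => x y.
    rewrite HV !inE; do 2![case: (_ \in Vf); case: (_ \in l) => //=; rewrite ?orbF].
    by move=> /eqP -> /eqP ->.
  - by move=> i _; apply: pi_nonpos_neq_lam.
have [ss [ss0 ind last_ss]] := IH (red H S) (in_Gpi_red S H_pi) erefl.
exists (S :: ss); split => //.
by move: ss0 last_ss {ind}; case: ss.
Qed.

End Existence.

Theorem theorem3 (n : nat) (G : graph n) :
  wf_graph G -> gV G = [set: 'I_n] -> in_Gpi G ->
  forall Vf : {set 'I_n}, Vf != set0 ->
    (exists RG : graph n, gV RG = Vf /\
       forall ss : seq {set 'I_n}, ss != [::] -> induces G ss ->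
         last set0 ss = Vf -> seq_result G ss = RG)
    /\ (exists ss : seq {set 'I_n},
          [/\ ss != [::], induces G ss & last set0 ss = Vf]).
Proof.
move=> [E_V _ w_E] V_full G_pi Vf Vf0.
have G_supp : supported G by split.
have [ss [ss0 ind last_ss]] : exists ss, [/\ ss != [::], induces G ss & last set0 ss = Vf].
  apply: (@exists_reduction_seq n Vf Vf0 (enum (~: Vf)) G G_pi).
  by rewrite V_full; apply/setP => x; rewrite !inE mem_enum inE orbN.
split; last by exists ss.
have red_ss := seq_result_is_reduction G_supp ss0 ind last_ss.
exists (seq_result G ss); split; first by case: red_ss.
move=> ss' ss'0 ind' last_ss'; apply: is_reduction_unique red_ss.
exact: seq_result_is_reduction.
Qed.
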